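(* Let $R$ be an integral domain and let $I, J$ be power stable ideals of $R[X]$ such that the ideals $I\cap R$ and $J\cap R$ of $R$ are comaximal. Then $I\cap J$ is power stable.
   Context: An ideal $I$ of the polynomial ring $R[X]$ over an integral domain $R$ is called power stable if $I^t\cap R = (I\cap R)^t$ for all integers $t\geq 1$. *)

From HB Require Import structures.
From mathcomp Require Import all_boot all_order all_algebra.
Set Implicit Arguments. Unset Strict Implicit. Unset Printing Implicit Defensive.
Import GRing.Theory.
Local Open Scope ring_scope.

Definition is_ideal (A : comNzRingType) (I : A -> Prop) : Prop :=
  [/\ I 0,
      (forall x y, I x -> I y -> I (x + y)) &
      (forall r x, I x -> I (r * x))].

Inductive ideal_mul (A : comNzRingType) (I J : A -> Prop) : A -> Prop :=
  | ideal_mul0 : ideal_mul I J 0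
  | ideal_mulD a b x : I a -> J b -> ideal_mul I J x -> ideal_mul I J (a * b + x).

Fixpoint ideal_pow (A : comNzRingType) (I : A -> Prop) (t : nat) : A -> Prop :=
  match t with
  | 0%N => fun _ => True
  | t'.+1 => ideal_mul (ideal_pow I t') I
  end.

Definition ideal_cap (A : comNzRingType) (I J : A -> Prop) : A -> Prop :=
  fun x => I x /\ J x.

(* I ∩ R for an ideal I of R[X] (R identified with constant polynomials). *)
Definition contr (R : idomainType) (I : {poly R} -> Prop) : R -> Prop :=
  fun r => I r%:P.

Definition comaximal (A : comNzRingType) (I J : A -> Prop) : Prop :=
  exists a b, [/\ I a, J b & a + b = 1].

Definition power_stable (R : idomainType) (I : {poly R} -> Prop) : Prop :=
  forall t : nat, (1 <= t)%N ->
    forall r : R, contr (ideal_pow I t) r <-> ideal_pow (contr I) t r.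

From HB Require Import structures.
From mathcomp Require Import all_boot all_order all_algebra.
Set Implicit Arguments. Unset Strict Implicit. Unset Printing Implicit Defensive.
Import GRing.Theory.
Local Open Scope ring_scope.

(* Write a := I ∩ R and b := J ∩ R; then (I ∩ J) ∩ R = a ∩ b by definition.
   - The inclusion (a ∩ b)^t ⊆ (I ∩ J)^t ∩ R holds for any ideal, since the
     constant embedding R -> R[X] is a ring morphism.
   - Conversely, if r ∈ (I ∩ J)^t ∩ R then r ∈ I^t ∩ R = a^t and
     r ∈ J^t ∩ R = b^t by power stability of I and J.  Since a and b are
     comaximal, so are a^t and b^t, hence a^t ∩ b^t = a^t b^t, and
     a^t b^t ⊆ (a ∩ b)^t because a product of a^t-element and a b^t-element
     is a sum of products of t elements of a ∩ b. *)

Section IdealsOfCommutativeRing.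
Variable A : comNzRingType.
Implicit Types P Q K : A -> Prop.

Lemma ideal_mul_least P Q K : is_ideal K ->
  (forall a b, P a -> Q b -> K (a * b)) ->
  forall x, ideal_mul P Q x -> K x.
Proof.
case=> K0 KD _ KPQ x; elim=> [|a b y Pa Qb _ Ky] //.
by apply: KD => //; apply: KPQ.
Qed.

Lemma mul_ideal P Q : is_ideal P -> is_ideal (ideal_mul P Q).
Proof.
case=> _ _ PM; split; first exact: ideal_mul0.
- move=> x y Hx Hy; elim: Hx => [|a b x' Pa Qb _ IH]; first by rewrite add0r.
  by rewrite -addrA; apply: ideal_mulD.
- move=> r x; elim=> [|a b x' Pa Qb _ IH]; first by rewrite mulr0; exact: ideal_mul0.
  by rewrite mulrDr mulrA; apply: ideal_mulD => //; apply: PM.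
Qed.

Lemma pow_ideal P n : is_ideal (ideal_pow P n).
Proof.
elim: n => [|n IH] /=; first by split.
exact: mul_ideal IH.
Qed.

(* The preimage {y | K (c * y)} of an ideal under multiplication by c; it
   lets ideal_mul_least be applied with one factor of a product fixed. *)
Lemma mul_preimage_ideal K c : is_ideal K -> is_ideal (fun y => K (c * y)).
Proof.
case=> K0 KD KM; split; first by rewrite mulr0.
- by move=> x y Kx Ky; rewrite mulrDr; apply: KD.
- by move=> r x Kx; rewrite mulrCA; apply: KM.
Qed.

Lemma pow_mono P P' n x : (forall y, P y -> P' y) ->
  ideal_pow P n x -> ideal_pow P' n x.
Proof.
move=> PP'; elim: n x => [|n IH] x //=.
by elim=> [|a b y Pa Qb _ Hy]; [exact: ideal_mul0 | apply: ideal_mulD; auto].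
Qed.

(* A product of an element of P^n and an element of Q^n lies in (P ∩ Q)^n:
   by the universal property of the product ideal it suffices to treat
   y = y' * a and z = z' * b with y' ∈ P^(n-1), z' ∈ Q^(n-1), a ∈ P, b ∈ Q,
   and then y * z = (y' * z') * (a * b). *)
Lemma pow_cap_mul P Q n y z : is_ideal P -> is_ideal Q ->
  ideal_pow P n y -> ideal_pow Q n z -> ideal_pow (ideal_cap P Q) n (y * z).
Proof.
move=> HP HQ; elim: n y z => [|n IH] y z //= Py Qz.
have HC : is_ideal (ideal_pow (ideal_cap P Q) n.+1) by exact: pow_ideal.
rewrite mulrC; move: y Py; apply: ideal_mul_least (mul_preimage_ideal z HC) _.
move=> y a Py Pa; rewrite mulrC; move: z Qz.
apply: ideal_mul_least (mul_preimage_ideal (y * a) HC) _ => z b Qz Qb.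
rewrite mulrACA -[_ * _]addr0; apply: ideal_mulD; last exact: ideal_mul0.
- exact: IH.
- by case: HP HQ => [_ _ PM] [_ _ QM]; split; [rewrite mulrC|]; [apply: PM|apply: QM].
Qed.

Lemma comaximal_sym P Q : comaximal P Q -> comaximal Q P.
Proof. by case=> a [b [Pa Qb ab1]]; exists b, a; split => //; rewrite addrC. Qed.

(* If P + Q = A and P + Q' = A then P + Q Q' = A: expand 1 = (p + q)(p' + q'). *)
Lemma comaximal_mul P Q Q' : is_ideal P ->
  comaximal P Q -> comaximal P Q' -> comaximal P (ideal_mul Q Q').
Proof.
case=> _ PD PM [p [q [Pp Qq pq1]]] [p' [q' [Pp' Qq' pq1']]].
exists (p * (p' + q') + q * p'), (q * q' + 0); split.
- by apply: PD; [rewrite mulrC|]; apply: PM.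
- by apply: ideal_mulD => //; exact: ideal_mul0.
- by rewrite addr0 -addrA -mulrDr pq1' !mulr1 pq1.
Qed.

Lemma comaximal_powr P Q n : is_ideal P ->
  comaximal P Q -> comaximal P (ideal_pow Q n).
Proof.
move=> HP PQ; elim: n => [|n IH] /=; last exact: comaximal_mul.
by case: HP => P0 _ _; exists 0, 1; rewrite add0r.
Qed.

Lemma comaximal_pow P Q n : is_ideal P -> is_ideal Q ->
  comaximal P Q -> comaximal (ideal_pow P n) (ideal_pow Q n).
Proof.
move=> HP HQ PQ; apply: comaximal_powr; first exact: pow_ideal.
by apply: comaximal_sym; apply: comaximal_powr => //; apply: comaximal_sym.
Qed.

(* For comaximal P and Q, P ∩ Q ⊆ P Q: write x = p x + x q with p + q = 1. *)
Lemma comaximal_cap_mul P Q x : comaximal P Q -> P x -> Q x -> ideal_mul P Q x.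
Proof.
case=> p [q [Pp Qq pq1]] Px Qx.
have -> : x = p * x + (x * q + 0) by rewrite addr0 [p * x]mulrC -mulrDr pq1 mulr1.
by apply: ideal_mulD => //; apply: ideal_mulD => //; exact: ideal_mul0.
Qed.

End IdealsOfCommutativeRing.

Lemma contr_ideal (R : idomainType) (I : {poly R} -> Prop) :
  is_ideal I -> is_ideal (contr I).
Proof.
case=> I0 ID IM; split; rewrite /contr.
- by rewrite polyC0.
- by move=> x y Ix Iy; rewrite polyCD; apply: ID.
- by move=> r x Ix; rewrite polyCM; apply: IM.
Qed.

Lemma contr_pow (R : idomainType) (I : {poly R} -> Prop) n r :
  ideal_pow (contr I) n r -> ideal_pow I n r%:P.
Proof.
elim: n r => [|n IH] r //=.
elim=> [|a b x Ia Ib _ Ix]; first by rewrite polyC0; exact: ideal_mul0.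
by rewrite polyCD polyCM; apply: ideal_mulD => //; apply: IH.
Qed.

Theorem lemma3p1 (R : idomainType) (I J : {poly R} -> Prop) :
  is_ideal I -> is_ideal J ->
  power_stable I -> power_stable J ->
  comaximal (contr I) (contr J) ->
  power_stable (ideal_cap I J).
Proof.
move=> HI HJ stI stJ IJ t t_gt0 r; split=> [rIJt|]; last exact: contr_pow.
have rIt : ideal_pow (contr I) t r.
  by apply/(stI t t_gt0); apply: pow_mono rIJt => y [].
have rJt : ideal_pow (contr J) t r.
  by apply/(stJ t t_gt0); apply: pow_mono rIJt => y [].
have hI := contr_ideal HI; have hJ := contr_ideal HJ.
have rItJt := comaximal_cap_mul (comaximal_pow t hI hJ IJ) rIt rJt.
apply: ideal_mul_least (pow_ideal _ t) _ _ rItJt.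
by move=> y z; apply: pow_cap_mul.
Qed.
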